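(* Suppose $v_0=0$ and the agent is protected by limited liability. Let $F\in\mathcal{F}(\mu)$ have support $\{\mathbf{x}_1,\dots,\mathbf{x}_m\}\subseteq\operatorname{int}\Delta(\Theta)$, $m\le n$, and let $(M,t)$ be a contract implementing $F$ that minimizes the principal's expected cost among all contracts implementing $F$. Then for each state $k=1,\dots,n$ there exists $j^*(k)\in\{1,\dots,m\}$ such that $t(\mathbf{x}_{j^*(k)},\theta_k)=0$, and all other transfers are determined by optimal learning: $t(\mathbf{x}_j,\theta_k)=X^k(j,j^*(k))$ for all $j=1,\dots,m$.
   Context: Let $\Theta=\{\theta_1,\dots,\theta_n\}$ be a finite set of states and $\mu\in\Delta(\Theta)$ a full-support prior. A belief $\mathbf{x}\in\Delta(\Theta)$ is identified with its first $n-1$ entries, $x^k$ = probability of $\theta_k$, $x^n=1-\sum_{k<n}x^k$. $\mathcal{F}(\mu)$ is the set of Bayes-plausible distributions over posteriors. Acquiring $F$ costs $C(F)=\kappa\int c\,dF$, $\kappa>0$, $c:\Delta(\Theta)\to\mathbb{R}_+$ strictly convex, twice continuously differentiable, bounded on the interior, $c(\mu)=0$; $c_k$ is its partial derivative in the $k$-th coordinate ($k\le n-1$). A contract $(M,t)$: compact message set $M$ and transfer $t:M\times\Theta\to\mathbb{R}_+$ (limited liability) in the agent's utils; the agent's utility for money $v$ is strictly increasing, continuously differentiable, $v(0)=0$, and paying $t$ utils costs the principal $v^{-1}(t)$. The agent's outside option is $v_0$. Timing: the principal offers $(M,t)$; the agent rejects (getting $v_0$) or accepts, chooses any $G\in\mathcal{F}(\mu)$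 paying $C(G)$, privately observes a posterior $\mathbf{x}\sim G$, then walks away (getting $v_0$) or sends $d\in M$ and receives $t(d,\theta)$ in realized state $\theta$. $N(\mathbf{x}\mid d)=\sum_k x^k t(d,\theta_k)-\kappa c(\mathbf{x})$. $(M,t)$ implements $F$ if $M=\operatorname{supp}(F)$, $t\ge0$, and ''accept, acquire $F$, send the realized posterior as message'' is optimal for the agent among all strategies (rejecting; or accepting, acquiring any $G$, and at each posterior sending any possibly randomized message or walking away). The principal's expected cost is $\sum_j F(\{\mathbf{x}_j\})\sum_k x_j^k v^{-1}(t(\mathbf{x}_j,\theta_k))$. For $i,j$ define $\Xi_{ij}=\kappa[c(\mathbf{x}_i)-\sum_{k=1}^{n-1}x_i^kc_k(\mathbf{x}_i)]-\kappa[c(\mathbf{x}_j)-\sum_{k=1}^{n-1}x_j^kc_k(\mathbf{x}_j)]$, $X^n(i,j)=\Xi_{ij}$, and $X^k(i,j)=\kappa c_k(\mathbf{x}_i)-\kappa c_k(\mathbf{x}_j)+\Xi_{ij}$ for $k\le n-1$ (so $X^k(j,j)=0$). *)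

From HB Require Import structures.
From mathcomp Require Import all_boot all_order all_algebra.
From mathcomp Require Import all_classical all_reals all_analysis.
Set Implicit Arguments. Unset Strict Implicit. Unset Printing Implicit Defensive.
Import Order.TTheory GRing.Theory Num.Theory.
Import numFieldNormedType.Exports.
Local Open Scope ring_scope.
Local Open Scope classical_set_scope.

Section Model.
Variable R : realType.
Variable n : nat.   (* number of states; theta_k is index k : 'I_n,
                       theta_n (the "last" state) is the index of value n.-1 *)

(* beliefs are row vectors x : 'rV_n, x 0 k = probability of theta_k *)
Definition in_simplex (x : 'rV[R]_n) : Prop :=
  (forall k, 0 <= x 0 k) /\ \sum_(k < n) x 0 k = 1.

Definition in_int_simplex (x : 'rV[R]_n) : Prop :=
  (forall k, 0 < x 0 k) /\ \sum_(k < n) x 0 k = 1.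

Definition is_last (k : 'I_n) : bool := (k : nat) == n.-1.

(* direction e_k - e_n: moving coordinate k of the first n-1 coordinates
   while x^n = 1 - sum_{k<n} x^k adjusts. *)
Definition dirv (k : 'I_n) : 'rV[R]_n :=
  \row_(i < n) (((i == k) : nat)%:R - ((is_last i) : nat)%:R).

(* c_k(x): partial derivative of c w.r.t. the k-th coordinate (k <= n-1) in
   the parametrization by the first n-1 coordinates. *)
Definition cpart (c : 'rV[R]_n -> R) (x : 'rV[R]_n) (k : 'I_n) : R :=
  'D_(dirv k) c x.

Definition xiterm (kappa : R) (c : 'rV[R]_n -> R) (x : 'rV[R]_n) : R :=
  kappa * (c x - \sum_(k < n | ~~ is_last k) x 0 k * cpart c x k).

Definition Xi (kappa : R) c (xi xj : 'rV[R]_n) : R :=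
  xiterm kappa c xi - xiterm kappa c xj.

Definition Xk (kappa : R) c (xi xj : 'rV[R]_n) (k : 'I_n) : R :=
  if is_last k then Xi kappa c xi xj
  else kappa * cpart c xi k - kappa * cpart c xj k + Xi kappa c xi xj.

Definition strictly_convex_on_simplex (c : 'rV[R]_n -> R) : Prop :=
  forall x y : 'rV[R]_n, in_simplex x -> in_simplex y -> x != y ->
  forall a : R, 0 < a < 1 ->
    c (a *: x + (1 - a) *: y) < a * c x + (1 - a) * c y.

Definition C2_on_int_simplex (c : 'rV[R]_n -> R) : Prop :=
  forall k l : 'I_n,
    (forall x, in_int_simplex x ->
       derivable c x (dirv k) /\ derivable ('D_(dirv k) c) x (dirv l)) /\
    {within in_int_simplex, continuous ('D_(dirv l) ('D_(dirv k) c))}.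

Definition bayes_plausible (mu : 'rV[R]_n) (p : nat)
  (w : 'I_p -> R) (y : 'I_p -> 'rV[R]_n) : Prop :=
  (forall i, 0 <= w i) /\ \sum_(i < p) w i = 1 /\
  (forall i, in_simplex (y i)) /\ \sum_(i < p) w i *: y i = mu.

(* expected utility (in utils) of the transfer for message d at posterior x *)
Definition msg_value (m : nat) (t : 'I_m -> 'I_n -> R) (d : 'I_m)
  (x : 'rV[R]_n) : R := \sum_(k < n) x 0 k * t d k.

(* Payoff of accepting contract ('I_m, t), acquiring G = (w,y) and playing the
   randomized strategy s : at posterior y i, send message Some d with prob.
   s i (Some d), walk away (getting v0) with prob. s i None. *)
Definition agent_payoff (kappa v0 : R) (c : 'rV[R]_n -> R) (m : nat)
  (t : 'I_m -> 'I_n -> R) (p : nat) (w : 'I_p -> R) (y : 'I_p -> 'rV[R]_n)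
  (s : 'I_p -> option 'I_m -> R) : R :=
  \sum_(i < p) w i *
    (\sum_(d : option 'I_m)
        s i d * (match d with Some d' => msg_value t d' (y i) | None => v0 end)
     - kappa * c (y i)).

Definition valid_strategy (m p : nat) (s : 'I_p -> option 'I_m -> R) : Prop :=
  forall i, (forall d, 0 <= s i d) /\ \sum_(d : option 'I_m) s i d = 1.

Definition truthful_payoff (kappa : R) (c : 'rV[R]_n -> R) (m : nat)
  (t : 'I_m -> 'I_n -> R) (wF : 'I_m -> R) (xs : 'I_m -> 'rV[R]_n) : R :=
  \sum_(j < m) wF j * (msg_value t j (xs j) - kappa * c (xs j)).

Definition implements (mu : 'rV[R]_n) (kappa v0 : R) (c : 'rV[R]_n -> R)
  (m : nat) (wF : 'I_m -> R) (xs : 'I_m -> 'rV[R]_n)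
  (t : 'I_m -> 'I_n -> R) : Prop :=
  (forall j k, 0 <= t j k) /\
  v0 <= truthful_payoff kappa c t wF xs /\
  (forall (p : nat) (w : 'I_p -> R) (y : 'I_p -> 'rV[R]_n)
          (s : 'I_p -> option 'I_m -> R),
      bayes_plausible mu w y -> valid_strategy s ->
      agent_payoff kappa v0 c t w y s <= truthful_payoff kappa c t wF xs).

Definition principal_cost (vinv : R -> R) (m : nat) (wF : 'I_m -> R)
  (xs : 'I_m -> 'rV[R]_n) (t : 'I_m -> 'I_n -> R) : R :=
  \sum_(j < m) wF j * \sum_(k < n) xs j 0 k * vinv (t j k).

End Model.

From HB Require Import structures.
From mathcomp Require Import all_boot all_order all_algebra.
From mathcomp Require Import all_classical all_reals all_analysis.
From mathcomp Require Import ring lra.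
Import Order.TTheory GRing.Theory Num.Theory.
Import numFieldNormedType.Exports.
Local Open Scope ring_scope.
Local Open Scope classical_set_scope.
Set Implicit Arguments. Unset Strict Implicit.

(* Write N(x|j) for the agent's net payoff [net j x].
   Perturbing the posteriors x_l along the directions e_k - e_n shows, to first
   order, that the slopes t(x_j,k) - t(x_j,n) - kappa c_k(x_j) of N(.|j) at x_j
   do not depend on j; shifting a little mass from x_i to x_j while moving x_j
   towards x_i shows that the tangent plane of N(.|j) at x_j lies below
   N(x_i|i).  By symmetry the intercepts
   t(x_j,n) - kappa [c(x_j) - sum_k x_j^k c_k(x_j)] coincide as well, which is
   the identity t(x_j,k) = t(x_j',k) + X^k(j,j').
   Subtracting from the transfers in each state their minimum over messages
   lowers every payoff that does not walk away by the same constant, keeps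
   transfers nonnegative (so walking away remains dominated) and keeps
   participation (via the uninformative experiment, as c(mu) = 0).  The lowered
   contract still implements F and is strictly cheaper unless that minimum
   is 0. *)

Lemma sum_pick (V : nmodType) (I : finType) (j : I) (F : I -> V) :
  \sum_i F i *+ (i == j) = F j.
Proof.
by rewrite (bigD1 j) //= eqxx mulr1n big1 ?addr0 // => i /negbTE ->.
Qed.

Lemma sum_option (V : nmodType) (I : finType) (F : option I -> V) :
  \sum_d F d = F None + \sum_i F (Some i).
Proof.
rewrite (bigD1 None) //= (reindex_omap Some id) /=; last by case.
by congr (_ + _); apply: eq_bigl => i; rewrite eqxx.
Qed.

Lemma sum_move_weight (R : pzRingType) (I : finType) (w F : I -> R) (e : R) (i j : I) :
  \sum_l (w l + e *+ (l == j) - e *+ (l == i)) * F l = \sum_l w l * F l + e * (F j - F i).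
Proof.
under eq_bigr do rewrite mulrBl mulrDl !mulrnAl.
by rewrite sumrB big_split /= !sum_pick mulrBr addrA.
Qed.

Lemma sum_move_weightZ (R : pzRingType) (V : lmodType R) (I : finType) (w : I -> R)
    (F : I -> V) (e : R) (i j : I) :
  \sum_l (w l + e *+ (l == j) - e *+ (l == i)) *: F l = \sum_l w l *: F l + e *: (F j - F i).
Proof.
under eq_bigr do rewrite scalerBl scalerDl -!scalerMnl.
by rewrite sumrB big_split /= !sum_pick scalerBr addrA.
Qed.

Section LastState.
Variables (R : realType) (n : nat) (L : 'I_n).
Hypothesis L_last : is_last L.

Lemma is_lastE (i : 'I_n) : is_last i = (i == L).
Proof.
move: L_last; rewrite /is_last => /eqP L_eq.
by apply/idP/idP => [/eqP i_eq|/eqP ->]; [apply/eqP/val_inj; rewrite /= i_eq L_eq|rewrite L_eq].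
Qed.

Lemma dirvE (k i : 'I_n) : dirv R k 0 i = (i == k)%:R - (i == L)%:R.
Proof. by rewrite mxE is_lastE. Qed.

Lemma sum_dirv (k : 'I_n) : \sum_i dirv R k 0 i = 0.
Proof.
under eq_bigr do rewrite dirvE.
by rewrite sumrB (sum_pick k (fun=> 1)) (sum_pick L (fun=> 1)) subrr.
Qed.

Lemma sum_scale_dirv (b : R) (k : 'I_n) : \sum_i (b *: dirv R k) 0 i = 0.
Proof. by under eq_bigr do rewrite mxE; rewrite -mulr_sumr sum_dirv mulr0. Qed.

Lemma sum_coord_dirv (u : 'rV[R]_n) :
  \sum_i u 0 i = 0 -> \sum_k u 0 k *: dirv R k = u.
Proof.
move=> u_sum0; apply/rowP => i; rewrite summxE.
under eq_bigr do rewrite mxE dirvE mulrBr.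
rewrite sumrB -mulr_suml u_sum0 mul0r subr0.
under eq_bigr do rewrite eq_sym mulr_natr.
exact: sum_pick.
Qed.

Lemma msg_value_dirv (m : nat) (t : 'I_m -> 'I_n -> R) (j : 'I_m) (k : 'I_n) :
  msg_value t j (dirv R k) = t j k - t j L.
Proof.
rewrite /msg_value; under eq_bigr do rewrite dirvE mulrBl !mulr_natl.
by rewrite sumrB !sum_pick.
Qed.

End LastState.

Lemma dirv_last (R : realType) (n : nat) (k : 'I_n) : is_last k -> dirv R k = 0.
Proof. by move=> k_last; apply/rowP => i; rewrite (dirvE R k_last) !mxE subrr. Qed.

Lemma cpart_last (R : realType) (n : nat) (c : 'rV[R]_n -> R) x (k : 'I_n) :
  is_last k -> cpart c x k = 0.
Proof. by move=> k_last; rewrite /cpart dirv_last // derive0. Qed.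

Section MessageValue.
Variables (R : realType) (n m : nat) (t : 'I_m -> 'I_n -> R).

Lemma msg_valueD (j : 'I_m) (u w : 'rV[R]_n) :
  msg_value t j (u + w) = msg_value t j u + msg_value t j w.
Proof. by rewrite /msg_value -big_split; apply: eq_bigr => i _; rewrite mxE mulrDl. Qed.

Lemma msg_valueZ (j : 'I_m) (a : R) (u : 'rV[R]_n) :
  msg_value t j (a *: u) = a * msg_value t j u.
Proof. by rewrite /msg_value mulr_sumr; apply: eq_bigr => i _; rewrite mxE mulrA. Qed.

End MessageValue.

Lemma cvg_sum_fin (R : realType) (T : Type) (F : set_system T) (FF : Filter F)
    (I : finType) (f : I -> T -> R) (a : I -> R) :
  (forall i, f i x @[x --> F] --> a i) -> \sum_i f i x @[x --> F] --> \sum_i a i.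
Proof. by move=> f_cvg; apply: cvg_big => //; exact: add_continuous. Qed.

Lemma cvg_diff_quotient_scaled (R : realType) (n : nat) (f : 'rV[R]_n -> R)
    (x d : 'rV[R]_n) (b : R) : derivable f x d ->
  h^-1 * (f (h *: (b *: d) + x) - f x) @[h --> (0 : R)^'+] --> b * 'D_d f x.
Proof.
move=> df; apply: cvg_dnbhs_at_right.
have [->|b_neq0] := eqVneq b 0.
  rewrite mul0r; under eq_fun do rewrite scale0r scaler0 add0r subrr mulr0.
  exact: cvg_cst.
have scale_dnbhs : (fun h : R => h * b) @ 0^' --> (0 : R)^'.
  have := @continuous_injective_withinNx _ _ (fun h : R => h * b) 0.
  rewrite mul0r; apply; first by apply: continuousM; [exact: cvg_id|exact: cvg_cst].
  by move=> y /eqP; rewrite mulf_eq0 (negbTE b_neq0) orbF => /eqP.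
have -> : (fun h => h^-1 * (f (h *: (b *: d) + x) - f x)) =
    (fun h => b * ((h * b)^-1 *: ((f \o shift x) ((h * b) *: d) - f x))).
  apply: funext => h /=; rewrite scalerA.
  have -> : forall r : R, (h * b)^-1 *: r = (h * b)^-1 * r by [].
  by rewrite invfM [h^-1 * _]mulrC !mulrA [b / h / b]mulrAC divff // mul1r mulrC.
by apply: cvgMl_tmp; exact: cvg_comp scale_dnbhs df.
Qed.

Lemma near_in_simplex (R : realType) (n : nat) (x u : 'rV[R]_n) :
  in_int_simplex x -> \sum_i u 0 i = 0 ->
  \forall h \near (0 : R)^'+, in_simplex (h *: u + x).
Proof.
move=> [x_gt0 x_sum1] u_sum0.
have : \forall h \near (0 : R)^'+, forall i, 0 < x 0 i + h * u 0 i.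
  apply: filter_forall => i.
  have : x 0 i + h * u 0 i @[h --> (0 : R)] --> x 0 i + 0 * u 0 i.
    by apply: cvgD; [exact: cvg_cst|apply: cvgMr_tmp; exact: cvg_id].
  rewrite mul0r addr0 => /cvg_at_right_filter/cvgr_gt; apply; exact: x_gt0.
apply: filterS => h pos; split => [i|]; first by rewrite !mxE addrC ltW.
under eq_bigr do rewrite !mxE.
by rewrite big_split /= -mulr_sumr u_sum0 mulr0 add0r.
Qed.

Section PureReports.
Variables (R : realType) (n m p : nat) (kappa v0 : R) (c : 'rV[R]_n -> R).
Variables (t : 'I_m -> 'I_n -> R) (w : 'I_p -> R) (y : 'I_p -> 'rV[R]_n).
Variable r : 'I_p -> 'I_m.

Definition report (i : 'I_p) (d : option 'I_m) : R := (d == Some (r i))%:R.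

Lemma report_valid : valid_strategy report.
Proof.
move=> i; split=> [d|]; first exact: ler0n.
by rewrite /report (bigD1 (Some (r i))) //= eqxx big1 ?addr0 // => d /negbTE ->.
Qed.

Lemma agent_payoff_report : agent_payoff kappa v0 c t w y report =
  \sum_i w i * (msg_value t (r i) (y i) - kappa * c (y i)).
Proof.
apply: eq_bigr => i _; congr (_ * (_ - _)).
by rewrite (bigD1 (Some (r i))) //= /report eqxx mul1r big1 ?addr0 // => d /negbTE ->;
  rewrite mul0r.
Qed.

End PureReports.

Section Deviations.
Variables (R : realType) (n m : nat) (mu : 'rV[R]_n) (kappa : R).
Variables (c : 'rV[R]_n -> R) (wF : 'I_m -> R) (xs : 'I_m -> 'rV[R]_n).
Variable t : 'I_m -> 'I_n -> R.
Hypothesis t_implements : implements mu kappa 0 c wF xs t.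

Definition net (j : 'I_m) (x : 'rV[R]_n) : R := msg_value t j x - kappa * c x.

Lemma deviation_le (I : finType) (w : I -> R) (y : I -> 'rV[R]_n) (r : I -> 'I_m) :
  (forall i, 0 <= w i) -> \sum_i w i = 1 -> (forall i, in_simplex (y i)) ->
  \sum_i w i *: y i = mu ->
  \sum_i w i * net (r i) (y i) <= truthful_payoff kappa c t wF xs.
Proof.
move=> w_ge0 w_sum1 y_simplex w_mean; have [_ [_ optimal]] := t_implements.
pose e := enum_val (A := I).
have sum_enum (V : nmodType) (F : I -> V) : \sum_q F (e q) = \sum_i F i.
  by rewrite (big_enum_val (A := I)).
have := optimal _ (w \o e) (y \o e) _ _ (report_valid R (r \o e)).
rewrite agent_payoff_report (sum_enum _ (fun i => w i * net (r i) (y i))); apply.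
rewrite /bayes_plausible /comp (sum_enum _ w) (sum_enum _ (fun i => w i *: y i)).
by split.
Qed.

Lemma split_deviation_le (om : 'I_m -> R) (z : 'I_m -> 'I_n -> 'rV[R]_n) :
  (0 < n)%N -> (forall l, 0 <= om l) -> \sum_l om l = 1 ->
  (forall l k, in_simplex (z l k)) ->
  \sum_l om l *: (n%:R^-1 *: \sum_k z l k) = mu ->
  \sum_l om l * (n%:R^-1 * \sum_k net l (z l k)) <= truthful_payoff kappa c t wF xs.
Proof.
move=> n_gt0 om_ge0 om_sum1 z_simplex om_mean.
have n_neq0 : n%:R != 0 :> R by rewrite pnatr_eq0 -lt0n.
have -> : \sum_l om l * (n%:R^-1 * \sum_k net l (z l k)) =
    \sum_(q : 'I_m * 'I_n) om q.1 / n%:R * net q.1 (z q.1 q.2).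
  rewrite -(pair_bigA _ (fun l k => om l / n%:R * net l (z l k))).
  by apply: eq_bigr => l _; rewrite mulrA mulr_sumr.
apply: deviation_le => [q||[]//|]; first by rewrite divr_ge0 ?ler0n.
- rewrite -(pair_bigA _ (fun l k => om l / n%:R)) -[RHS]om_sum1; apply: eq_bigr => l _.
  by rewrite sumr_const card_ord -[_ *+ n]mulr_natr divfK.
- rewrite -(pair_bigA _ (fun l k => (om l / n%:R) *: z l k)) -[RHS]om_mean.
  by apply: eq_bigr => l _; rewrite -scaler_sumr scalerA.
Qed.

Lemma refine_deviation_le (j : 'I_m) (om : 'I_m -> R) (z : 'I_n -> 'rV[R]_n) :
  (0 < n)%N -> (forall l, in_simplex (xs l)) ->
  (forall l, 0 <= om l) -> \sum_l om l = 1 -> (forall k, in_simplex (z k)) ->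
  \sum_l om l *: xs l + om j *: (n%:R^-1 *: \sum_k z k - xs j) = mu ->
  \sum_l om l * net l (xs l) + om j * (n%:R^-1 * \sum_k net j (z k) - net j (xs j))
    <= truthful_payoff kappa c t wF xs.
Proof.
move=> n_gt0 xs_simplex om_ge0 om_sum1 z_simplex om_mean.
have n_neq0 : n%:R != 0 :> R by rewrite pnatr_eq0 -lt0n.
have sum_update (V : zmodType) (A F : 'I_m -> V) :
    \sum_l (if l == j then A l else F l) = \sum_l F l + (A j - F j).
  rewrite (bigD1 j) //= eqxx [X in _ = X + _](bigD1 j) //= [RHS]addrC [RHS]addrA subrK.
  by congr (_ + _); apply: eq_bigr => l /negbTE ->.
have average_cst (V : lmodType R) (a : V) : n%:R^-1 *: \sum_(k < n) a = a.
  by rewrite sumr_const card_ord -[a *+ n]scaler_nat scalerA mulVf ?scale1r.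
set z' := fun l k => if l == j then z k else xs l.
have average_net l : n%:R^-1 * \sum_k net l (z' l k) =
    if l == j then n%:R^-1 * \sum_k net j (z k) else net l (xs l).
  rewrite /z'; case: eqP => [->|_] //=.
  by rewrite sumr_const card_ord -[net l (xs l) *+ n]mulr_natl mulKf.
have average_post l : n%:R^-1 *: \sum_k z' l k =
    if l == j then n%:R^-1 *: \sum_k z k else xs l.
  by rewrite /z'; case: eqP => _ //=; rewrite average_cst.
have payoff_eq : \sum_l om l * (n%:R^-1 * \sum_k net l (z' l k)) =
    \sum_l om l * net l (xs l) + om j * (n%:R^-1 * \sum_k net j (z k) - net j (xs j)).
  under eq_bigr => l _ do rewrite average_net (fun_if (fun x => om l * x)).
  by rewrite sum_update -mulrBr.
have mean_eq : \sum_l om l *: (n%:R^-1 *: \sum_k z' l k) =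
    \sum_l om l *: xs l + om j *: (n%:R^-1 *: \sum_k z k - xs j).
  under eq_bigr => l _ do rewrite average_post (fun_if (fun x => om l *: x)).
  by rewrite sum_update scalerBr.
rewrite -payoff_eq; apply: split_deviation_le => // [l k|]; first by rewrite /z'; case: eqP.
by rewrite mean_eq.
Qed.

Variable L : 'I_n.
Hypothesis L_last : is_last L.

Lemma cvg_net_quotient (l : 'I_m) (x : 'rV[R]_n) (b : R) (k : 'I_n) :
  derivable c x (dirv R k) ->
  h^-1 * (net l (h *: (b *: dirv R k) + x) - net l x) @[h --> (0 : R)^'+] -->
    b * (t l k - t l L - kappa * cpart c x k).
Proof.
move=> c_der; rewrite mulrBr mulrCA -(msg_value_dirv L_last t).
have quotient_eq : {near (0 : R)^'+, (fun h => b * msg_value t l (dirv R k) -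
      kappa * (h^-1 * (c (h *: (b *: dirv R k) + x) - c x))) =1
    (fun h => h^-1 * (net l (h *: (b *: dirv R k) + x) - net l x))}.
  near=> h; have h_neq0 : h != 0 by apply: lt0r_neq0; near: h; exact: nbhs_right_gt.
  by rewrite /net msg_valueD !msg_valueZ; field.
apply: cvg_trans (near_eq_cvg quotient_eq) _ => /=.
apply: cvgB; first exact: cvg_cst.
by apply: cvgMl_tmp; exact: cvg_diff_quotient_scaled.
Unshelve. all: by end_near.
Qed.

Hypotheses (wF_gt0 : forall l, 0 < wF l) (wF_sum1 : \sum_l wF l = 1).
Hypotheses (wF_mean : \sum_l wF l *: xs l = mu) (xs_int : forall l, in_int_simplex (xs l)).
Hypothesis c_derivable : forall l k, derivable c (xs l) (dirv R k).

Definition slope (l : 'I_m) (k : 'I_n) : R := t l k - t l L - kappa * cpart c (xs l) k.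

Lemma weighted_slope_le (beta : 'I_m -> R) (k : 'I_n) :
  \sum_l wF l * beta l = 0 -> \sum_l wF l * (beta l * slope l k) <= 0.
Proof.
move=> beta_mean; pose y h l := h *: (beta l *: dirv R k) + xs l.
apply: (cvgr_to_le (F := (0 : R)^'+)
  (f := fun h => \sum_l wF l * (h^-1 * (net l (y h l) - net l (xs l))))).
  by apply: cvg_sum_fin => l; apply: cvgMl_tmp; apply: cvg_net_quotient; exact: c_derivable.
near=> h.
have h_gt0 : 0 < h by near: h; exact: nbhs_right_gt.
have y_simplex : forall l, in_simplex (y h l).
  near: h; apply: filter_forall => l.
  exact: near_in_simplex (xs_int l) (sum_scale_dirv L_last _ _).
have y_mean : \sum_l wF l *: y h l = mu.
  under eq_bigr do rewrite scalerDr !scalerA mulrAC.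
  by rewrite big_split /= -scaler_suml -mulr_suml beta_mean mul0r scale0r add0r.
suff -> : \sum_l wF l * (h^-1 * (net l (y h l) - net l (xs l))) =
    h^-1 * (\sum_l wF l * net l (y h l) - truthful_payoff kappa c t wF xs).
  rewrite pmulr_rle0 ?invr_gt0 // subr_le0.
  exact: deviation_le id (fun l => ltW (wF_gt0 l)) wF_sum1 y_simplex y_mean.
rewrite /truthful_payoff -sumrB mulr_sumr; apply: eq_bigr => l _; rewrite /net; ring.
Unshelve. all: by end_near.
Qed.

Lemma slope_indep (i j : 'I_m) (k : 'I_n) : slope i k = slope j k.
Proof.
suff slope_le : forall i' j', slope i' k <= slope j' k.
  by apply/eqP; rewrite eq_le !slope_le.
move=> i' j'; pose beta l := (wF i')^-1 *+ (l == i') - (wF j')^-1 *+ (l == j').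
have pick (F : 'I_m -> R) : \sum_l wF l * (beta l * F l) = F i' - F j'.
  under eq_bigr do rewrite mulrBl mulrBr !mulrnAl !mulrnAr.
  by rewrite sumrB !sum_pick !mulVKf ?gt_eqF.
rewrite -subr_le0 -(pick (slope^~ k)); apply: weighted_slope_le.
by have := pick (fun=> 1); under eq_bigr do rewrite mulr1; rewrite subrr.
Qed.

Lemma xs_simplex (l : 'I_m) : in_simplex (xs l).
Proof. by have [xs_gt0 xs_sum1] := xs_int l; split=> // k; exact: ltW. Qed.

Lemma n_gt0 : (0 < n)%N.
Proof. exact: leq_ltn_trans (leq0n L) (ltn_ord L). Qed.

Lemma n_neq0 : n%:R != 0 :> R.
Proof. by rewrite pnatr_eq0 -lt0n n_gt0. Qed.

(* [x_j] is spread into [n] posteriors, each displaced along a single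
   direction [dirv R k] (the only directions in which [c] is known to be
   differentiable), with mean [x_j + h u] (see [spread_mean]). *)
Definition spread (j : 'I_m) (u : 'rV[R]_n) (h : R) (k : 'I_n) : 'rV[R]_n :=
  h *: ((n%:R * u 0 k) *: dirv R k) + xs j.

Lemma spread_mean (j : 'I_m) (u : 'rV[R]_n) (h : R) :
  \sum_k u 0 k = 0 -> n%:R^-1 *: \sum_k spread j u h k - xs j = h *: u.
Proof.
move=> u_sum0; rewrite big_split /= sumr_const card_ord -[xs j *+ n]scaler_nat.
rewrite scalerDr scalerA mulVf ?n_neq0 // scale1r addrK.
under eq_bigr do rewrite -scalerA.
by rewrite -!scaler_sumr (sum_coord_dirv L_last u_sum0) !scalerA mulrCA mulVf ?n_neq0 ?mulr1.
Qed.

Lemma move_mass_le (i j : 'I_m) (h : R) :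
  i != j -> 0 < h -> h * (wF i + wF j) < wF i ->
  (forall k, in_simplex (spread j (xs i - xs j) h k)) ->
  net j (xs j) - net i (xs i) +
    n%:R^-1 * \sum_k h^-1 * (net j (spread j (xs i - xs j) h k) - net j (xs j)) <= 0.
Proof.
move=> neq_ij h_gt0 h_small spread_simplex.
have wFi_gt0 := wF_gt0 i; have wFj_gt0 := wF_gt0 j.
have h_lt1 : h < 1 by nra.
(* [eps] is chosen so that [om j * h = eps]: the mass [eps] moved from [x_i]
   to [x_j] offsets the shift [h (x_i - x_j)] of the mass [om j] at [x_j]. *)
pose eps := wF j * h / (1 - h).
pose om l := wF l + eps *+ (l == j) - eps *+ (l == i).
have eps_gt0 : 0 < eps by rewrite divr_gt0 ?mulr_gt0 ?subr_gt0.
have om_jh : om j * h = eps.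
  rewrite /om eqxx eq_sym (negbTE neq_ij) /= mulr1n subr0 /eps.
  by field; rewrite subr_eq0 gt_eqF.
have om_ge0 l : 0 <= om l.
  rewrite /om; have [->|neq_li] := eqVneq l i; last first.
    by rewrite /= mulr0n subr0 addr_ge0 ?mulrn_wge0 ?ltW.
  rewrite (negbTE neq_ij) /= mulr0n mulr1n addr0 subr_ge0.
  by rewrite ler_pdivrMr ?subr_gt0 //; nra.
have om_sum1 : \sum_l om l = 1 by rewrite sumrB big_split /= !sum_pick wF_sum1 addrK.
have := @refine_deviation_le j _ _ n_gt0 xs_simplex om_ge0 om_sum1 spread_simplex.
rewrite sum_move_weightZ wF_mean spread_mean; last first.
  by under eq_bigr do rewrite !mxE; rewrite sumrB !(proj2 (xs_int _)) subrr.
have cancel : xs j - xs i + (xs i - xs j) = 0 by rewrite addrC addrA subrK subrr.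
rewrite scalerA om_jh -addrA -scalerDr cancel scaler0 addr0 => /(_ erefl).
rewrite sum_move_weight -addrA -[X in _ <= X]addr0 lerD2l => deviation.
rewrite -(pmulr_rle0 _ eps_gt0); apply: le_trans deviation; rewrite mulrDr lerD2l.
rewrite -om_jh -mulr_sumr sumrB sumr_const card_ord -[net j (xs j) *+ n]mulr_natl.
by rewrite le_eqVlt; apply/orP; left; apply/eqP; field; rewrite n_neq0 gt_eqF.
Qed.

Lemma tangent_le (i j : 'I_m) :
  net j (xs j) + \sum_k (xs i 0 k - xs j 0 k) * slope j k <= net i (xs i).
Proof.
have [<-|neq_ij] := eqVneq i j.
  by rewrite big1 ?addr0 // => k _; rewrite subrr mul0r.
have u_sum0 : \sum_k (xs i - xs j) 0 k = 0.
  by under eq_bigr do rewrite !mxE; rewrite sumrB !(proj2 (xs_int _)) subrr.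
have -> : \sum_k (xs i 0 k - xs j 0 k) * slope j k =
    n%:R^-1 * \sum_k (n%:R * (xs i - xs j) 0 k) * slope j k.
  by rewrite mulr_sumr; apply: eq_bigr => k _; rewrite !mxE mulrA mulKf ?n_neq0.
rewrite -subr_le0 addrAC.
apply: (cvgr_to_le (F := (0 : R)^'+) (f := fun h => net j (xs j) - net i (xs i) +
  n%:R^-1 * \sum_k h^-1 * (net j (spread j (xs i - xs j) h k) - net j (xs j)))).
  apply: cvgD; first exact: cvg_cst.
  by apply: cvgMl_tmp; apply: cvg_sum_fin => k; apply: cvg_net_quotient; exact: c_derivable.
near=> h; apply: (move_mass_le neq_ij).
- by near: h; exact: nbhs_right_gt.
- rewrite -ltr_pdivlMr ?addr_gt0 //; near: h; apply: nbhs_right_lt.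
  by rewrite divr_gt0 ?addr_gt0.
- near: h; apply: filter_forall => k.
  exact: near_in_simplex (xs_int j) (sum_scale_dirv L_last _ _).
Unshelve. all: by end_near.
Qed.

Definition level (l : 'I_m) : R := t l L - xiterm kappa c (xs l).

Lemma net_tangent (l : 'I_m) : net l (xs l) = \sum_k xs l 0 k * slope l k + level l.
Proof.
have cpart_sum : \sum_k xs l 0 k * (kappa * cpart c (xs l) k) =
    kappa * \sum_(k | ~~ is_last k) xs l 0 k * cpart c (xs l) k.
  rewrite (bigID (@is_last n)) /= big1 ?add0r => [|k k_last]; last by rewrite cpart_last ?mulr0.
  by rewrite mulr_sumr; apply: eq_bigr => k _; rewrite mulrCA.
rewrite /net /msg_value /level /xiterm /slope.
under [in RHS]eq_bigr do rewrite !mulrBr.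
by rewrite !sumrB cpart_sum -mulr_suml (proj2 (xs_int l)) mul1r; ring.
Qed.

Lemma level_le (i j : 'I_m) : level j <= level i.
Proof.
have := tangent_le i j; rewrite !net_tangent.
under [\sum_k xs i 0 k * _]eq_bigr do rewrite (slope_indep i j).
under [\sum_k (_ - _) * _]eq_bigr do rewrite mulrBl.
rewrite sumrB; lra.
Qed.

Lemma transfer_eq_Xk (j j' : 'I_m) (k : 'I_n) :
  t j k = t j' k + Xk kappa c (xs j) (xs j') k.
Proof.
have t_eq l : t l k = slope l k + t l L + kappa * cpart c (xs l) k by rewrite /slope; ring.
have level_eq : level j = level j' by apply/eqP; rewrite eq_le !level_le.
rewrite /level in level_eq; rewrite /Xk /Xi; case: ifP => k_last.
  have -> : k = L by apply/eqP; rewrite -(is_lastE L_last).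
  lra.
by rewrite (t_eq j) (t_eq j') (slope_indep j j'); lra.
Qed.

End Deviations.

Lemma sum_coord_mean (R : pzRingType) (n p : nat) (w : 'I_p -> R)
    (y : 'I_p -> 'rV[R]_n) (a : 'I_n -> R) :
  \sum_k (\sum_i w i *: y i) 0 k * a k = \sum_i w i * \sum_k y i 0 k * a k.
Proof.
under eq_bigr do rewrite summxE big_distrl /=.
rewrite exchange_big; apply: eq_bigr => i _; rewrite mulr_sumr.
by apply: eq_bigr => k _; rewrite mxE mulrA.
Qed.

Section WalkingAway.
Variables (R : realType) (n m p : nat) (kappa : R) (c : 'rV[R]_n -> R).
Variables (t : 'I_m -> 'I_n -> R) (w : 'I_p -> R) (y : 'I_p -> 'rV[R]_n) (j0 : 'I_m).

Definition never_walk (s : 'I_p -> option 'I_m -> R) (i : 'I_p) (d : option 'I_m) : R :=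
  if d is Some d' then s i d + (d' == j0)%:R * s i None else 0.

Lemma never_walk_valid s : valid_strategy s -> valid_strategy (never_walk s).
Proof.
move=> s_valid i; have [s_ge0 s_sum1] := s_valid i; split=> [[d|] /=|].
- by rewrite addr_ge0 ?mulr_ge0 ?ler0n.
- exact: lexx.
rewrite sum_option /= add0r big_split /= -mulr_suml (sum_pick j0 (fun=> 1)) mul1r.
by rewrite -s_sum1 sum_option addrC.
Qed.

Lemma agent_payoff_never_walk s :
  (forall j k, 0 <= t j k) -> (forall i, 0 <= w i) -> (forall i, in_simplex (y i)) ->
  valid_strategy s -> agent_payoff kappa 0 c t w y s <= agent_payoff kappa 0 c t w y (never_walk s).
Proof.
move=> t_ge0 w_ge0 y_simplex s_valid; apply: ler_sum => i _.
apply: ler_wpM2l => //; rewrite lerD2r.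
rewrite !sum_option /= !mulr0 !add0r.
under [X in _ <= X]eq_bigr do rewrite mulrDl.
rewrite big_split /= lerDl; apply: sumr_ge0 => d _.
have [s_ge0 _] := s_valid i; have [y_ge0 _] := y_simplex i.
by rewrite !mulr_ge0 ?ler0n // /msg_value sumr_ge0 // => k _; rewrite mulr_ge0.
Qed.

End WalkingAway.

Section LoweringTransfers.
Variables (R : realType) (n m : nat) (mu : 'rV[R]_n) (kappa : R) (c : 'rV[R]_n -> R).
Variables (wF : 'I_m -> R) (xs : 'I_m -> 'rV[R]_n) (t : 'I_m -> 'I_n -> R).
Variable a : 'I_n -> R.

Definition lower_transfers (j : 'I_m) (k : 'I_n) : R := t j k - a k.

Lemma msg_value_lower (j : 'I_m) (x : 'rV[R]_n) :
  msg_value lower_transfers j x = msg_value t j x - \sum_k x 0 k * a k.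
Proof. by rewrite /msg_value -sumrB; apply: eq_bigr => k _; rewrite mulrBr. Qed.

Lemma truthful_payoff_lower : \sum_j wF j *: xs j = mu ->
  truthful_payoff kappa c lower_transfers wF xs =
  truthful_payoff kappa c t wF xs - \sum_k mu 0 k * a k.
Proof.
move=> <-; rewrite sum_coord_mean /truthful_payoff -sumrB.
by apply: eq_bigr => j _; rewrite msg_value_lower; ring.
Qed.

Lemma agent_payoff_lower (v0 : R) (p : nat) (w : 'I_p -> R) (y : 'I_p -> 'rV[R]_n) s :
  bayes_plausible mu w y -> valid_strategy s -> (forall i, s i None = 0) ->
  agent_payoff kappa v0 c lower_transfers w y s =
  agent_payoff kappa v0 c t w y s - \sum_k mu 0 k * a k.
Proof.
move=> [_ [_ [_ <-]]] s_valid s_None; rewrite sum_coord_mean /agent_payoff -sumrB.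
apply: eq_bigr => i _; have [_] := s_valid i; rewrite !sum_option s_None !mul0r !add0r.
move=> s_sum1; under eq_bigr do rewrite msg_value_lower mulrBr.
by rewrite sumrB -mulr_suml s_sum1; ring.
Qed.

Lemma implements_lower (j0 : 'I_m) :
  implements mu kappa 0 c wF xs t -> in_simplex mu -> c mu = 0 ->
  \sum_j wF j *: xs j = mu -> (forall j k, a k <= t j k) ->
  implements mu kappa 0 c wF xs lower_transfers.
Proof.
move=> [t_ge0 [_ t_optimal]] mu_simplex c_mu wF_mean a_le.
have lower_ge0 j k : 0 <= lower_transfers j k by rewrite subr_ge0.
have lower_optimal : forall p (w : 'I_p -> R) y (s : 'I_p -> option 'I_m -> R),
    bayes_plausible mu w y -> valid_strategy s ->
    agent_payoff kappa 0 c lower_transfers w y s <=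
    truthful_payoff kappa c lower_transfers wF xs.
  move=> p w y s wy_plausible s_valid; have [w_ge0 [_ [y_simplex _]]] := wy_plausible.
  apply: le_trans (agent_payoff_never_walk kappa c j0 lower_ge0 w_ge0 y_simplex s_valid) _.
  rewrite agent_payoff_lower //; last by apply: never_walk_valid.
  rewrite truthful_payoff_lower // lerD2r.
  exact: t_optimal (never_walk_valid j0 s_valid).
split=> //; split=> //.
apply: le_trans (lower_optimal 1%N (fun=> 1) (fun=> mu) _ _ (report_valid R (fun=> j0))).
  rewrite agent_payoff_report big_ord1 c_mu mulr0 subr0 mul1r.
  by rewrite /msg_value sumr_ge0 // => k _; rewrite mulr_ge0 //; case: mu_simplex.
rewrite /bayes_plausible !big_ord1 scale1r.
by split=> [_|]; [exact: ler01|split=> //; split].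
Qed.

End LoweringTransfers.

Lemma homo_right_inverse_lt (R : realDomainType) (v vinv : R -> R) :
  {homo v : x y / x < y} -> (forall u, 0 <= u -> v (vinv u) = u) ->
  forall x y, 0 <= x -> x < y -> vinv x < vinv y.
Proof.
move=> v_lt v_vinv x y x_ge0 xy; have y_ge0 := le_trans x_ge0 (ltW xy).
rewrite ltNge le_eqVlt; apply/negP => /orP[/eqP vinv_eq|/v_lt].
  by move: xy; rewrite -(v_vinv x) // -(v_vinv y) // vinv_eq ltxx.
by rewrite !v_vinv // => /(lt_trans xy); rewrite ltxx.
Qed.

Section OptimalContract.
Variables (R : realType) (n m : nat) (mu : 'rV[R]_n) (kappa : R) (c : 'rV[R]_n -> R).
Variables (v vinv : R -> R) (wF : 'I_m -> R) (xs : 'I_m -> 'rV[R]_n).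
Variable t : 'I_m -> 'I_n -> R.
Hypotheses (v_lt : {homo v : x y / x < y}) (v_vinv : forall u, 0 <= u -> v (vinv u) = u).
Hypotheses (wF_gt0 : forall j, 0 < wF j) (xs_int : forall j, in_int_simplex (xs j)).

Lemma principal_cost_lower_lt (a : 'I_n -> R) (j0 : 'I_m) (k0 : 'I_n) :
  (forall k, 0 <= a k) -> (forall j k, a k <= t j k) -> 0 < a k0 ->
  principal_cost vinv wF xs (lower_transfers t a) < principal_cost vinv wF xs t.
Proof.
move=> a_ge0 a_le a_gt0; have vinv_lt := homo_right_inverse_lt v_lt v_vinv.
have vinv_le x y : 0 <= x -> x <= y -> vinv x <= vinv y.
  by move=> x_ge0; rewrite le_eqVlt => /orP[/eqP ->|/(vinv_lt _ _ x_ge0)/ltW].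
rewrite /principal_cost /lower_transfers.
apply: ltr_sum => [|j _]; first by apply/hasP; exists j0; rewrite ?mem_index_enum.
have [xj_gt0 _] := xs_int j.
rewrite ltr_pM2l // (bigD1 k0) //= [X in _ < X](bigD1 k0) //=; apply: ltr_leD.
  by rewrite ltr_pM2l // vinv_lt ?subr_ge0 // ltrBlDr ltrDl.
apply: ler_sum => k _; apply: ler_wpM2l; first exact: ltW.
by apply: vinv_le; rewrite ?subr_ge0 // lerBlDr lerDl.
Qed.

Hypotheses (wF_sum1 : \sum_j wF j = 1) (wF_mean : \sum_j wF j *: xs j = mu).
Hypotheses (mu_simplex : in_simplex mu) (c_mu : c mu = 0).
Hypothesis t_implements : implements mu kappa 0 c wF xs t.
Hypothesis t_optimal : forall t', implements mu kappa 0 c wF xs t' ->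
  principal_cost vinv wF xs t <= principal_cost vinv wF xs t'.

Lemma optimal_transfer_vanishes (k : 'I_n) : exists j, t j k = 0.
Proof.
have [j0 _] : exists j0 : 'I_m, true.
  case: (pickP (xpredT : pred 'I_m)) => [j0|no_index]; first by exists j0.
  by move: wF_sum1; rewrite big_pred0 // => /eqP; rewrite eq_sym oner_eq0.
pose jmin k' := [arg min_(j < j0) t j k']%O.
pose a k' := t (jmin k') k'.
have a_le j k' : a k' <= t j k' by rewrite /a /jmin; case: arg_minP => // i _; apply.
have [t_ge0 _] := t_implements.
have a_ge0 k' : 0 <= a k' := t_ge0 _ _.
exists (jmin k); apply/eqP; rewrite eq_le t_ge0 andbT -/(a k) leNgt; apply/negP => a_gt0.
have := t_optimal (implements_lower j0 t_implements mu_simplex c_mu wF_mean a_le).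
by rewrite leNgt (principal_cost_lower_lt j0 a_ge0 a_le a_gt0).
Qed.

End OptimalContract.

Theorem proposition3 (R : realType) (n : nat)
  (mu : 'rV[R]_n) (kappa v0 : R) (c : 'rV[R]_n -> R) (v vinv : R -> R)
  (m : nat) (wF : 'I_m -> R) (xs : 'I_m -> 'rV[R]_n) (t : 'I_m -> 'I_n -> R) :
  (* full-support prior *)
  in_int_simplex mu ->
  (* information cost *)
  0 < kappa ->
  (forall x, in_simplex x -> 0 <= c x) ->
  strictly_convex_on_simplex c ->
  C2_on_int_simplex c ->
  (exists B : R, forall x, in_int_simplex x -> c x <= B) ->
  c mu = 0 ->
  (* utility for money: strictly increasing, C^1, v(0) = 0; vinv = v^-1 *)
  {homo v : a b / a < b} ->
  (forall a : R, derivable v a 1) ->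
  continuous (v^`()) ->
  v 0 = 0 ->
  (forall u : R, 0 <= u -> v (vinv u) = u) ->
  (* outside option *)
  v0 = 0 ->
  (* F: Bayes-plausible with support {xs j} in the interior, m <= n *)
  (forall j, 0 < wF j) ->
  \sum_(j < m) wF j = 1 ->
  \sum_(j < m) wF j *: xs j = mu ->
  injective xs ->
  (forall j, in_int_simplex (xs j)) ->
  (m <= n)%N ->
  (* (M,t) implements F at minimal expected cost *)
  implements mu kappa v0 c wF xs t ->
  (forall t' : 'I_m -> 'I_n -> R, implements mu kappa v0 c wF xs t' ->
     principal_cost vinv wF xs t <= principal_cost vinv wF xs t') ->
  forall k : 'I_n, exists jstar : 'I_m,
    t jstar k = 0 /\ forall j : 'I_m, t j k = Xk kappa c (xs j) (xs jstar) k.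
Proof.
move=> mu_int _ _ _ c_C2 _ c_mu v_lt _ _ _ v_vinv -> wF_gt0 wF_sum1 wF_mean _ xs_int _
  t_implements t_optimal k.
have mu_simplex : in_simplex mu.
  by have [mu_gt0 mu_sum1] := mu_int; split=> // i; exact: ltW.
have c_derivable l k' : derivable c (xs l) (dirv R k').
  exact: (proj1 (proj1 (c_C2 k' k') _ (xs_int l))).
have [L L_last] : exists L : 'I_n, is_last L.
  have pred_lt : (n.-1 < n)%N by rewrite ltn_predL (leq_ltn_trans (leq0n k)).
  by exists (Ordinal pred_lt); rewrite /is_last.
have [j' t_j'k] := optimal_transfer_vanishes v_lt v_vinv wF_gt0 xs_int wF_sum1 wF_mean
  mu_simplex c_mu t_implements t_optimal k.
exists j'; split=> // j.
by rewrite (transfer_eq_Xk t_implements L_last wF_gt0 wF_sum1 wF_mean xs_int c_derivable j j')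
  t_j'k add0r.
Qed.
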